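(* For non-negative integers $n,p$ define \begin{multline*} g(n,p)=\frac{4p^2+6p+2}{n+2p+2}+4p+(4p^2+4np+4n+10p+6)2^{1-n}+2^{-2p}\\ +2^{-n-2p}\sum_{i=1}^{p+1} i\Big\{2\binom{n+2p+4}{n+2i+1}-\binom{n+2p+4}{n+2i+2}-(2n+4p+6)\binom{2p+4}{2i+1}\Big\}\\ +2^{2-n}\sum_{i=1}^{p+1}\sum_{k=2i-1}^{2p+1} i\,2^{-k}\Big\{\frac{n+2p+1}{n+2p+2}\binom{n+k+2}{n+2i+1}-\binom{n+k+2}{n+2i}+\binom{k+3}{2i+1}\Big\}\\ +2^{-2p}\sum_{i=1}^{p+1}\sum_{k=1}^{n} i\,2^{-k}\Big\{\binom{k+2p+4}{k+2i+2}-\frac{2n+4p+6}{n+2p+2}\binom{k+2p+3}{k+2i+1}\Big\}. \end{multline*} Then $g(n,p)=0$ for all integers $n,p\ge0$.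
   Context: $\binom{a}{b}=\frac{a!}{b!(a-b)!}$ for integers $0\le b\le a$. A sum with no terms equals $0$. *)

From HB Require Import structures.
From mathcomp Require Import all_boot all_order all_algebra.
Set Implicit Arguments. Unset Strict Implicit. Unset Printing Implicit Defensive.
Import Order.TTheory GRing.Theory Num.Theory.
Local Open Scope ring_scope.

Definition bin (a b : nat) : rat := ('C(a, b))%:R.

Definition pow2inv (m : nat) : rat := (2%:R ^+ m)^-1.

Definition g (n p : nat) : rat :=
  let N : rat := n%:R in
  let P : rat := p%:R in
  (4 * P ^+ 2 + 6 * P + 2) / (N + 2 * P + 2)
  + 4 * P
  + (4 * P ^+ 2 + 4 * N * P + 4 * N + 10 * P + 6) * (2 / 2%:R ^+ n)
  + pow2inv (2 * p)
  + pow2inv (n + 2 * p) *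
      \sum_(1 <= i < p.+2)
        i%:R * (2 * bin (n + 2 * p + 4) (n + 2 * i + 1)
                - bin (n + 2 * p + 4) (n + 2 * i + 2)
                - (2 * N + 4 * P + 6) * bin (2 * p + 4) (2 * i + 1))
  + (4 / 2%:R ^+ n) *
      \sum_(1 <= i < p.+2) \sum_((2 * i).-1 <= k < (2 * p + 1).+1)
        i%:R * pow2inv k *
          ((N + 2 * P + 1) / (N + 2 * P + 2) * bin (n + k + 2) (n + 2 * i + 1)
           - bin (n + k + 2) (n + 2 * i)
           + bin (k + 3) (2 * i + 1))
  + pow2inv (2 * p) *
      \sum_(1 <= i < p.+2) \sum_(1 <= k < n.+1)
        i%:R * pow2inv k *
          (bin (k + 2 * p + 4) (k + 2 * i + 2)
           - (2 * N + 4 * P + 6) / (N + 2 * P + 2) * bin (k + 2 * p + 3) (k + 2 * i + 1)).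

From HB Require Import structures.
From mathcomp Require Import all_boot all_order all_algebra.
From mathcomp Require Import ring zify.
Set Implicit Arguments. Unset Strict Implicit. Unset Printing Implicit Defensive.
Import Order.TTheory GRing.Theory Num.Theory.
Local Open Scope ring_scope.

(* Write Phi T l = C(T,0) + ... + C(T,l) for a partial row sum of Pascal's
   triangle.  The argument has three layers.
   1. Every inner sum over k in g has the shape  sum_k 2^-k C(k+b, L).  By
      Pascal's rule, Phi (T+1) L = 2 Phi T L - C(T,L), so such a sum telescopes
      to a difference of two partial row sums (sum_pow2inv_bin).  Using the
      complement identity Phi T L + Phi T R = 2^T (L + R + 1 = T), all row sums
      of row n+2p+4 cancel, and the i-th summand of g collapses to a combination
      of  i C(2p+4, 2i+1),  i Phi(2p+4, 2p+2-2i)  and  i C(2p+4, 2i+2)  with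
      coefficients depending only on n and p (summand_collapse).
   2. The three resulting sums over i have closed forms.  Each is a weighted
      row sum  sum_j w(j) C(2p+4, j);  applying Pascal's rule twice turns it into
      sum_j (w j + 2 w (j+1) + w (j+2)) C(2p+2, j), and for the weights at hand
      this smoothed weight is a polynomial of degree <= 2 in j, whose weighted
      row sum is explicit (sum_quad_bin).
   3. Substituting the closed forms into g leaves a rational-function identity
      in n, p, 2^n and 2^(2p), which the field tactic checks. *)

Lemma binS_Q T j : bin T.+1 j.+1 = bin T j.+1 + bin T j.
Proof. by rewrite /bin binS natrD. Qed.

Lemma bin0_Q T : bin T 0 = 1.
Proof. by rewrite /bin bin0. Qed.

Lemma binn_Q T : bin T T = 1.
Proof. by rewrite /bin binn. Qed.

Lemma bin_small_Q T j : (T < j)%N -> bin T j = 0.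
Proof. by move=> ltTj; rewrite /bin bin_small. Qed.

Lemma bin_sub_Q T j : (j <= T)%N -> bin T (T - j) = bin T j.
Proof. by move=> leJT; rewrite /bin bin_sub. Qed.

Lemma bin_compl_Q T m m' : (m + m' = T)%N -> bin T m = bin T m'.
Proof. by move=> <-; rewrite /bin -{2}(addnK m' m) bin_sub // leq_addl. Qed.

Lemma pascal_weights (f : nat -> rat) N M : (N < M)%N ->
  \sum_(j < M.+1) f j * bin N.+1 j = \sum_(j < M) (f j + f j.+1) * bin N j.
Proof.
move=> ltNM.
have split_first : \sum_(j < M.+1) f j * bin N j
    = f 0%N + \sum_(j < M) f j.+1 * bin N j.+1.
  by rewrite big_ord_recl bin0_Q mulr1.
have drop_last : \sum_(j < M.+1) f j * bin N j = \sum_(j < M) f j * bin N j.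
  by rewrite big_ord_recr /= bin_small_Q // mulr0 addr0.
rewrite big_ord_recl bin0_Q mulr1.
under eq_bigr => j _ do rewrite /bump /= binS_Q mulrDr.
under [RHS]eq_bigr => j _ do rewrite mulrDl.
by rewrite !big_split /= -drop_last split_first; ring.
Qed.

Lemma pascal_weights2 (f : nat -> rat) N M : (N < M)%N ->
  \sum_(j < M.+2) f j * bin N.+2 j
  = \sum_(j < M) (f j + 2 * f j.+1 + f j.+2) * bin N j.
Proof.
move=> ltNM.
rewrite (@pascal_weights f N.+1 M.+1) // (@pascal_weights (fun j => f j + f j.+1) N M) //.
by apply: eq_bigr => j _; congr (_ * _); ring.
Qed.

Definition quad (a b c : rat) (j : nat) : rat := a + b * j%:R + c * j%:R ^+ 2.

(* Row sums with a quadratic weight: the moments sum_j j^d C(N,j), d <= 2.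
   Induction on N, since Pascal smoothing keeps the weight quadratic. *)
Lemma sum_quad_bin a b c N M : (N < M)%N ->
  \sum_(j < M) quad a b c j * bin N j
  = (a + b * N%:R / 2 + c * N%:R * (N%:R + 1) / 4) * 2 ^+ N.
Proof.
elim: N a b c M => [|N IH] a b c [|M] //= ltNM.
  rewrite big_ord_recl bin0_Q big1 => [|j _]; last by rewrite bin_small_Q ?mulr0.
  by rewrite /quad /= expr0; ring.
rewrite pascal_weights //.
rewrite (eq_bigr (fun j : 'I_M => quad (2 * a + b + c) (2 * b + 2 * c) (2 * c) j * bin N j));
  last by move=> j _; rewrite /quad mulrSr; ring.
by rewrite IH // exprS mulrSr; field.
Qed.

(* Sums over odd or even positions of a row.  Grouping the indices in pairs
   (2t, 2t+1) turns them into weighted row sums with a parity-dependent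
   weight, whose (1, 2, 1)-smoothing is linear in j. *)

Lemma sum_pairs (F : nat -> rat) K :
  \sum_(j < 2 * K) F j = \sum_(t < K) (F (2 * t)%N + F (2 * t).+1).
Proof.
elim: K => [|K IH]; first by rewrite !big_ord0.
by rewrite mulnS !add2n !big_ord_recr /= IH addrA.
Qed.

Definition odd_weight (j : nat) : rat := if odd j then (j%:R - 1) / 2 else 0.

Lemma odd_weight_smooth j :
  odd_weight j + 2 * odd_weight j.+1 + odd_weight j.+2 = quad 0 1 0 j.
Proof. by rewrite /odd_weight /quad /=; case: (odd j) => /=; rewrite !mulrSr; field. Qed.

Lemma sum_odd_index N K : (N.+1 < 2 * K)%N ->
  \sum_(t < K) t%:R * bin N.+2 (2 * t).+1 = N%:R * 2 ^+ N / 2.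
Proof.
move=> ltN2K.
have extend : \sum_(t < K.+1) t%:R * bin N.+2 (2 * t).+1
              = \sum_(t < K) t%:R * bin N.+2 (2 * t).+1.
  by rewrite big_ord_recr /= bin_small_Q ?mulr0 ?addr0 //; lia.
have as_row_sum : \sum_(t < K.+1) t%:R * bin N.+2 (2 * t).+1
                  = \sum_(j < 2 * K.+1) odd_weight j * bin N.+2 j.
  rewrite (sum_pairs (fun j => odd_weight j * bin N.+2 j)); apply: eq_bigr => t _.
  by rewrite /odd_weight /= oddM /= mulrSr natrM; field.
rewrite -extend as_row_sum mulnS add2n pascal_weights2; last lia.
under eq_bigr do rewrite odd_weight_smooth.
by rewrite sum_quad_bin; [field | lia].
Qed.

Definition even_weight (j : nat) : rat := if odd j then 0 else j%:R / 2 - 1.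

Lemma even_weight_smooth j :
  even_weight j + 2 * even_weight j.+1 + even_weight j.+2 = quad (-1) 1 0 j.
Proof. by rewrite /even_weight /quad /=; case: (odd j) => /=; rewrite !mulrSr; field. Qed.

Lemma sum_even_index N K : (N < 2 * K)%N ->
  \sum_(t < K) t%:R * bin N.+2 (2 * t).+2 = (N%:R / 2 - 1) * 2 ^+ N + 1.
Proof.
move=> ltN2K.
have shift : \sum_(t < K.+1) (t%:R - 1) * bin N.+2 (2 * t)
             = -1 + \sum_(t < K) t%:R * bin N.+2 (2 * t).+2.
  rewrite big_ord_recl /= bin0_Q sub0r mulN1r; congr (_ + _).
  by apply: eq_bigr => t _; rewrite /bump /= mulnS add2n mulrSr; ring.
have as_row_sum : \sum_(t < K.+1) (t%:R - 1) * bin N.+2 (2 * t)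
                  = \sum_(j < 2 * K.+1) even_weight j * bin N.+2 j.
  rewrite (sum_pairs (fun j => even_weight j * bin N.+2 j)); apply: eq_bigr => t _.
  by rewrite /even_weight /= oddM /= natrM; field.
have -> : \sum_(t < K) t%:R * bin N.+2 (2 * t).+2
          = \sum_(t < K.+1) (t%:R - 1) * bin N.+2 (2 * t) + 1 by rewrite shift; ring.
rewrite as_row_sum mulnS add2n pascal_weights2 //.
under eq_bigr do rewrite even_weight_smooth.
by rewrite sum_quad_bin //; field.
Qed.

Lemma sum_from1 (F : nat -> rat) m : F 0%N = 0 ->
  \sum_(1 <= i < m) F i = \sum_(i < m) F i.
Proof.
case: m => [|m] F0; first by rewrite big_geq // big_ord0.
by rewrite -(big_mkord xpredT) big_ltn // F0 add0r.
Qed.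

Lemma sum_odd_moment p :
  \sum_(1 <= i < p.+2) i%:R * bin (2 * p + 4) (2 * i + 1) = (p + 1)%:R * 2 ^+ (2 * p + 2).
Proof.
rewrite sum_from1 ?mul0r //.
rewrite (eq_bigr (fun i : 'I_p.+2 => i%:R * bin (2 * p + 2).+2 (2 * i).+1)) => [|i _];
  last by rewrite addn1 (_ : 2 * p + 4 = (2 * p + 2).+2)%N; last lia.
by rewrite sum_odd_index; [rewrite !natrD ?natrM exprD; field | lia].
Qed.

Lemma sum_even_moment p :
  \sum_(1 <= i < p.+2) i%:R * bin (2 * p + 4) (2 * i + 2) = p%:R * 2 ^+ (2 * p + 2) + 1.
Proof.
rewrite sum_from1 ?mul0r //.
rewrite (eq_bigr (fun i : 'I_p.+2 => i%:R * bin (2 * p + 2).+2 (2 * i).+2)) => [|i _];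
  last by rewrite addn2 (_ : 2 * p + 4 = (2 * p + 2).+2)%N; last lia.
by rewrite sum_even_index; [rewrite !natrD ?natrM exprD; field | lia].
Qed.

Definition Phi (T l : nat) : rat := \sum_(j < l.+1) bin T j.

Lemma Phi0 T : Phi T 0 = 1.
Proof. by rewrite /Phi big_ord_recr big_ord0 /= add0r bin0_Q. Qed.

Lemma Phi_succ_index T l : Phi T l.+1 = Phi T l + bin T l.+1.
Proof. by rewrite /Phi big_ord_recr. Qed.

(* Pascal's rule summed along a row. *)
Lemma Phi_succ_row T l : Phi T.+1 l = 2 * Phi T l - bin T l.
Proof.
elim: l => [|l IH]; first by rewrite !Phi0 !bin0_Q; ring.
by rewrite !Phi_succ_index IH binS_Q; ring.
Qed.

Lemma Phi_full T : Phi T T = 2 ^+ T.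
Proof.
elim: T => [|T IH]; first by rewrite Phi0.
by rewrite Phi_succ_index Phi_succ_row IH !binn_Q exprS; ring.
Qed.

(* A row splits into a prefix and the mirror image of another prefix. *)
Lemma Phi_compl T L R : (L + R + 1 = T)%N -> Phi T L + Phi T R = 2 ^+ T.
Proof.
elim: T L R => [|T IH] L R sumLR; first lia.
case: R sumLR => [|R] sumLR.
  have -> : L = T by lia.
  by rewrite Phi0 -(Phi_full T.+1) Phi_succ_index binn_Q; ring.
have IH' : Phi T L = 2 ^+ T - Phi T R by rewrite -(IH L R); [ring | lia].
rewrite !Phi_succ_row Phi_succ_index IH'.
have -> : L = (T - R.+1)%N by lia.
by rewrite bin_sub_Q ?exprS; [ring | lia].
Qed.

Lemma Phi_indicator T l : (l <= T)%N ->
  Phi T l = \sum_(j < T.+1) (j <= l)%:R * bin T j.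
Proof.
move=> leLT; rewrite /Phi (big_ord_widen T.+1 (fun j => bin T j)) // big_mkcond /=.
by apply: eq_bigr => j _; rewrite ltnS; case: (j <= l)%N; rewrite ?mul1r ?mul0r.
Qed.

Definition tri (q : nat) : rat := q%:R * (q%:R + 1) / 2.

Lemma sum_first_nat q : \sum_(1 <= i < q.+1) i%:R = tri q.
Proof.
rewrite /tri; elim: q => [|q IH]; first by rewrite big_geq //; ring.
by rewrite big_nat_recr //= IH mulrSr; field.
Qed.

(* After exchanging the sums in sum_Phi_moment, position j of the row carries
   the weight sum of all i with j <= 2p+2-2i. *)
Lemma count_weight p j :
  \sum_(1 <= i < p.+2) i%:R * (j <= 2 * p + 2 - 2 * i)%:R = tri ((2 * p + 2 - j) %/ 2).
Proof.
set q := ((2 * p + 2 - j) %/ 2)%N.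
rewrite (big_cat_nat _ (n := q.+1)) //=; last by rewrite /q; lia.
rewrite -sum_first_nat [X in _ + X]big1_seq ?addr0 => [|i]; last first.
  rewrite mem_index_iota => /andP[_ /andP[lt_q_i lt_i_p2]].
  have -> : (j <= 2 * p + 2 - 2 * i)%N = false.
    by apply/negbTE; rewrite /q in lt_q_i; lia.
  by rewrite mulr0.
apply: eq_big_nat => i /andP[ge_i_1 le_i_q].
have -> : (j <= 2 * p + 2 - 2 * i)%N by rewrite /q in le_i_q; lia.
by rewrite mulr1.
Qed.

Lemma tri_smooth r :
  tri (r %/ 2) + 2 * tri (r.-1 %/ 2) + tri (r.-2 %/ 2) = (r%:R ^+ 2 - r%:R) / 2.
Proof.
rewrite /tri; case: r => [|[|s]]; try by rewrite ?div0n ?divn_small //; field.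
have [a [b [lt_b2 ->]]] : exists a b, (b < 2)%N /\ s = (2 * a + b)%N.
  by exists (s %/ 2)%N, (s %% 2)%N; rewrite ltn_mod mulnC -divn_eq.
have -> : ((2 * a + b).+2 %/ 2 = a.+1)%N by lia.
have -> : ((2 * a + b).+1 %/ 2 = a + b)%N by lia.
have -> : ((2 * a + b) %/ 2 = a)%N by lia.
by case: b lt_b2 => [|[|//]] _; rewrite !(natrD, natrM, mulrSr); field.
Qed.

Lemma sum_Phi_moment p :
  \sum_(1 <= i < p.+2) i%:R * Phi (2 * p + 4) (2 * p + 2 - 2 * i)
  = (p + 1)%:R * (2 * p + 1)%:R * 2 ^+ (2 * p).
Proof.
pose w j := tri ((2 * p + 2 - j) %/ 2).
have -> : \sum_(1 <= i < p.+2) i%:R * Phi (2 * p + 4) (2 * p + 2 - 2 * i)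
          = \sum_(j < (2 * p + 4).+1) w j * bin (2 * p + 4) j.
  rewrite (eq_big_nat _ _ (F2 := fun i =>
    \sum_(j < (2 * p + 4).+1) i%:R * (j <= 2 * p + 2 - 2 * i)%:R * bin (2 * p + 4) j)).
    by rewrite exchange_big /=; apply: eq_bigr => j _; rewrite -mulr_suml count_weight.
  move=> i _; rewrite Phi_indicator; last lia.
  by rewrite mulr_sumr; apply: eq_bigr => j _; rewrite mulrA.
rewrite (_ : 2 * p + 4 = (2 * p + 2).+2)%N; last lia.
rewrite pascal_weights2 //.
rewrite (eq_bigr (fun j : 'I_(2 * p + 2).+1 =>
  quad ((2 * p + 2)%:R * (2 * p + 1)%:R / 2) ((1 - 2 * (2 * p + 2)%:R) / 2) (1 / 2) j
  * bin (2 * p + 2) j)) => [|j _]; last first.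
  rewrite /w !subnS tri_smooth natrB; last by have := ltn_ord j; lia.
  by congr (_ * _); rewrite /quad; field.
by rewrite sum_quad_bin // !natrD ?natrM exprD; field.
Qed.

(* Telescoping: Pascal's rule makes  2^-k C(k+b, L)  a difference of
   consecutive terms  2^(1-k) Phi(k+b, L). *)

Lemma pow2invS k : pow2inv k.+1 = pow2inv k / 2.
Proof. by rewrite /pow2inv exprS invfM mulrC. Qed.

Lemma sum_pow2inv_bin b L K0 K' : (K0 <= K')%N ->
  \sum_(K0 <= k < K') pow2inv k * bin (k + b) L
  = 2 * (pow2inv K0 * Phi (K0 + b) L - pow2inv K' * Phi (K' + b) L).
Proof.
elim: K' => [|K' IH]; first by rewrite leqn0 => /eqP ->; rewrite big_geq //; ring.
rewrite leq_eqVlt => /orP[/eqP <-|]; first by rewrite big_geq //; ring.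
rewrite ltnS => le_K0_K'.
by rewrite big_nat_recr //= IH // pow2invS addSn Phi_succ_row; field.
Qed.

(* When the lower summation end is on the diagonal, the lower boundary term
   is a full row and only a short prefix of the top row survives. *)
Lemma sum_pow2inv_bin_diag b K0 K' : (K0 < K')%N ->
  \sum_(K0 <= k < K') pow2inv k * bin (k + b) (K0 + b)
  = 2 * pow2inv K' * Phi (K' + b) (K' - K0).-1.
Proof.
move=> lt_K0_K'; rewrite sum_pow2inv_bin ?Phi_full; last exact: ltnW.
have -> : Phi (K' + b) (K0 + b) = 2 ^+ (K' + b) - Phi (K' + b) (K' - K0).-1.
  by rewrite -(@Phi_compl (K' + b) (K0 + b) (K' - K0).-1); [ring | lia].
by rewrite /pow2inv !exprD; field; rewrite !expf_neq0.
Qed.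

(* The same one step below the diagonal. *)
Lemma sum_pow2inv_bin_subdiag b K0 K' : (K0 < K')%N ->
  \sum_(K0 <= k < K') pow2inv k * bin (k + b.+1) (K0 + b)
  = 2 * (pow2inv K' * Phi (K' + b.+1) (K' - K0) - pow2inv K0).
Proof.
move=> lt_K0_K'; rewrite sum_pow2inv_bin; last exact: ltnW.
have -> : Phi (K0 + b.+1) (K0 + b) = 2 ^+ (K0 + b.+1) - 1.
  by rewrite -(@Phi_compl (K0 + b.+1) (K0 + b) 0) ?Phi0; [ring | lia].
have -> : Phi (K' + b.+1) (K0 + b) = 2 ^+ (K' + b.+1) - Phi (K' + b.+1) (K' - K0).
  by rewrite -(@Phi_compl (K' + b.+1) (K0 + b) (K' - K0)); [ring | lia].
by rewrite /pow2inv !exprD; field; rewrite !expf_neq0.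
Qed.

Lemma sum_pow2inv_bin_from1 b L n :
  \sum_(1 <= k < n.+1) pow2inv k * bin (k + b) L
  = Phi b.+1 L - pow2inv n * Phi (n + b.+1) L.
Proof.
rewrite sum_pow2inv_bin // add1n addSn -addnS /pow2inv expr1 exprS.
by field; rewrite expf_neq0.
Qed.

Lemma shift_denominator_neq0 n p : n%:R + 2 * p%:R + 2 != 0 :> rat.
Proof. by rewrite -[2]/(2%:R) -natrM -!natrD pnatr_eq0 addn2. Qed.

(* The i-th summand of g, for a fixed 1 <= i <= p+1.  The five sums over k
   are evaluated by telescoping; the row sums of row n+2p+4 they produce
   cancel in summand_collapse. *)
Section SummandCollapse.

Variables n p i : nat.
Hypotheses (i_pos : (0 < i)%N) (i_le : (i <= p.+1)%N).

Lemma top_sum_first :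
  \sum_((2 * i).-1 <= k < (2 * p + 1).+1) pow2inv k * bin (n + k + 2) (n + 2 * i + 1)
  = pow2inv (2 * p + 1) * Phi (n + 2 * p + 4) (2 * p + 2 - 2 * i).
Proof.
rewrite (eq_big_nat _ _ (F2 := fun k =>
  pow2inv k * bin (k + (n + 2)) ((2 * i).-1 + (n + 2)))) => [|k _]; last first.
  by congr (_ * bin _ _); lia.
rewrite sum_pow2inv_bin_diag; last lia.
rewrite pow2invS (_ : (2 * p + 1).+1 + (n + 2) = n + 2 * p + 4)%N; last lia.
by rewrite (_ : ((2 * p + 1).+1 - (2 * i).-1).-1 = 2 * p + 2 - 2 * i)%N; [field | lia].
Qed.

Lemma top_sum_second :
  \sum_((2 * i).-1 <= k < (2 * p + 1).+1) pow2inv k * bin (n + k + 2) (n + 2 * i)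
  = pow2inv (2 * p + 1) * (Phi (n + 2 * p + 4) (2 * p + 2 - 2 * i)
                           + bin (n + 2 * p + 4) (n + 2 * i + 1))
    - 2 * pow2inv (2 * i).-1.
Proof.
rewrite (eq_big_nat _ _ (F2 := fun k =>
  pow2inv k * bin (k + (n + 1).+1) ((2 * i).-1 + (n + 1)))) => [|k _]; last first.
  by congr (_ * bin _ _); lia.
rewrite sum_pow2inv_bin_subdiag; last lia.
rewrite pow2invS (_ : (2 * p + 1).+1 + (n + 1).+1 = n + 2 * p + 4)%N; last lia.
rewrite (_ : (2 * p + 1).+1 - (2 * i).-1 = (2 * p + 2 - 2 * i).+1)%N; last lia.
by rewrite Phi_succ_index (@bin_compl_Q _ _ (n + 2 * i + 1)); [field | lia].
Qed.

Lemma top_sum_third :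
  \sum_((2 * i).-1 <= k < (2 * p + 1).+1) pow2inv k * bin (k + 3) (2 * i + 1)
  = pow2inv (2 * p + 1) * (2 * Phi (2 * p + 4) (2 * p + 2 - 2 * i)
                           + bin (2 * p + 4) (2 * i + 1))
    - 2 * pow2inv (2 * i).-1.
Proof.
rewrite (eq_big_nat _ _ (F2 := fun k =>
  pow2inv k * bin (k + 2.+1) ((2 * i).-1 + 2))) => [|k _]; last first.
  by congr (_ * bin _ _); lia.
rewrite sum_pow2inv_bin_subdiag; last lia.
rewrite pow2invS (_ : (2 * p + 1).+1 + 3 = (2 * p + 4).+1)%N; last lia.
rewrite (_ : (2 * p + 1).+1 - (2 * i).-1 = (2 * p + 2 - 2 * i).+1)%N; last lia.
by rewrite Phi_succ_row Phi_succ_index (@bin_compl_Q _ _ (2 * i + 1)); [field | lia].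
Qed.

Lemma low_sum_first :
  \sum_(1 <= k < n.+1) pow2inv k * bin (k + 2 * p + 4) (k + 2 * i + 2)
  = 2 * Phi (2 * p + 4) (2 * p + 2 - 2 * i) - bin (2 * p + 4) (2 * i + 2)
    - pow2inv n * (2 * Phi (n + 2 * p + 4) (2 * p + 2 - 2 * i)
                   - bin (n + 2 * p + 4) (n + 2 * i + 2)).
Proof.
rewrite (eq_big_nat _ _ (F2 := fun k =>
  pow2inv k * bin (k + (2 * p + 4)) (2 * p + 2 - 2 * i))) => [|k _]; last first.
  by rewrite addnA (@bin_compl_Q _ _ (2 * p + 2 - 2 * i)) //; lia.
rewrite sum_pow2inv_bin_from1 (_ : n + (2 * p + 4).+1 = (n + 2 * p + 4).+1)%N; last lia.
rewrite !Phi_succ_row (@bin_compl_Q (2 * p + 4) _ (2 * i + 2)); last lia.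
by rewrite (@bin_compl_Q (n + 2 * p + 4) (2 * p + 2 - 2 * i) (n + 2 * i + 2)); last lia.
Qed.

Lemma low_sum_second :
  \sum_(1 <= k < n.+1) pow2inv k * bin (k + 2 * p + 3) (k + 2 * i + 1)
  = Phi (2 * p + 4) (2 * p + 2 - 2 * i)
    - pow2inv n * Phi (n + 2 * p + 4) (2 * p + 2 - 2 * i).
Proof.
rewrite (eq_big_nat _ _ (F2 := fun k =>
  pow2inv k * bin (k + (2 * p + 3)) (2 * p + 2 - 2 * i))) => [|k _]; last first.
  by rewrite addnA (@bin_compl_Q _ _ (2 * p + 2 - 2 * i)) //; lia.
rewrite sum_pow2inv_bin_from1 (_ : n + (2 * p + 3).+1 = n + 2 * p + 4)%N; last lia.
by rewrite (_ : (2 * p + 3).+1 = 2 * p + 4)%N; last lia.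
Qed.

Lemma summand_collapse :
  pow2inv (n + 2 * p) *
    (i%:R * (2 * bin (n + 2 * p + 4) (n + 2 * i + 1)
             - bin (n + 2 * p + 4) (n + 2 * i + 2)
             - (2 * n%:R + 4 * p%:R + 6) * bin (2 * p + 4) (2 * i + 1)))
  + 4 / 2%:R ^+ n *
    \sum_((2 * i).-1 <= k < (2 * p + 1).+1)
      i%:R * pow2inv k *
        ((n%:R + 2 * p%:R + 1) / (n%:R + 2 * p%:R + 2) * bin (n + k + 2) (n + 2 * i + 1)
         - bin (n + k + 2) (n + 2 * i) + bin (k + 3) (2 * i + 1))
  + pow2inv (2 * p) *
    \sum_(1 <= k < n.+1)
      i%:R * pow2inv k *
        (bin (k + 2 * p + 4) (k + 2 * i + 2)
         - (2 * n%:R + 4 * p%:R + 6) / (n%:R + 2 * p%:R + 2)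
           * bin (k + 2 * p + 3) (k + 2 * i + 1))
  = - (2 * n%:R + 4 * p%:R + 4) * pow2inv (n + 2 * p) * (i%:R * bin (2 * p + 4) (2 * i + 1))
    + (4 * pow2inv (n + 2 * p) - 2 * pow2inv (2 * p) / (n%:R + 2 * p%:R + 2))
      * (i%:R * Phi (2 * p + 4) (2 * p + 2 - 2 * i))
    - pow2inv (2 * p) * (i%:R * bin (2 * p + 4) (2 * i + 2)).
Proof.
set c := (n%:R + 2 * p%:R + 1) / (n%:R + 2 * p%:R + 2).
set d := (2 * n%:R + 4 * p%:R + 6) / (n%:R + 2 * p%:R + 2).
have top_linear (A B C : nat -> rat) :
    \sum_((2 * i).-1 <= k < (2 * p + 1).+1) i%:R * pow2inv k * (c * A k - B k + C k)
    = i%:R * (c * \sum_((2 * i).-1 <= k < (2 * p + 1).+1) pow2inv k * A k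
              - \sum_((2 * i).-1 <= k < (2 * p + 1).+1) pow2inv k * B k
              + \sum_((2 * i).-1 <= k < (2 * p + 1).+1) pow2inv k * C k).
  by rewrite mulrDr mulrBr !mulr_sumr -sumrB -big_split /=; apply: eq_bigr => k _; ring.
have low_linear (A B : nat -> rat) :
    \sum_(1 <= k < n.+1) i%:R * pow2inv k * (A k - d * B k)
    = i%:R * (\sum_(1 <= k < n.+1) pow2inv k * A k
              - d * \sum_(1 <= k < n.+1) pow2inv k * B k).
  by rewrite mulrBr !mulr_sumr -sumrB; apply: eq_bigr => k _; ring.
rewrite top_linear low_linear top_sum_first top_sum_second top_sum_third.
rewrite low_sum_first low_sum_second /c /d /pow2inv !exprD.
by field; rewrite shift_denominator_neq0 !expf_neq0.
Qed.

End SummandCollapse.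

Lemma sum_combine (X a b c : rat) (r : seq nat) (F G H : nat -> rat) :
  X + a * \sum_(i <- r) F i + b * \sum_(i <- r) G i + c * \sum_(i <- r) H i =
  X + \sum_(i <- r) (a * F i + b * G i + c * H i).
Proof. by rewrite !big_split /= -!mulr_sumr !addrA. Qed.

Theorem lemma13 (n p : nat) : g n p = 0.
Proof.
rewrite /g; cbv zeta; rewrite sum_combine.
under eq_big_nat => i /andP[i_pos i_lt] do rewrite summand_collapse //.
rewrite sumrB big_split /= -!mulr_sumr.
rewrite sum_odd_moment sum_Phi_moment sum_even_moment /pow2inv !exprD.
by field; rewrite shift_denominator_neq0 !expf_neq0.
Qed.
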